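(* Let $n>1$ and $k\ge1$. Let $\mathcal{B}$ be a special $n$-Brinkhuis $k$-triple, and suppose some word of $\mathcal{B}^{(0)}$ begins with the letters $01$. Then $n\ge 13$, and exactly one of the following alternatives holds: <ul> <li>every word in $\mathcal{B}^{(0)}$ begins with $012021$ and ends with $120210$;</li> <li>every word in $\mathcal{B}^{(0)}$ begins with $012102$ and ends with $201210$.</li> </ul>
   Context: Let $\Sigma=\{0,1,2\}$. A word over $\Sigma$ is square-free if it cannot be written as $xyyz$ with $y$ nonempty. $\mathcal{A}(n)$ is the set of square-free words of length $n$. For a word $w$, $\bar w$ denotes its reversal. $\tau$ is the letter permutation $0\mapsto1$, $1\mapsto2$, $2\mapsto0$, applied letterwise to words and elementwise to sets of words. An $n$-Brinkhuis $(k_0,k_1,k_2)$-triple consists of sets $\mathcal{B}^{(i)}\subset\mathcal{A}(n)$, $i\in\{0,1,2\}$, where $\mathcal{B}^{(i)}$ has $k_i\ge1$ distinct words. The defining condition: for every square-free word $ii'i''\in\mathcal{A}(3)$ and all $u\in\mathcal{B}^{(i)}$, $v\in\mathcal{B}^{(i')}$, $x\in\mathcal{B}^{(i'')}$, the concatenation $uvx$ is square-free. A special $n$-Brinkhuis $k$-triple is an $n$-Brinkhuis $(k,k,k)$-triple satisfying two further conditions: <ul> <li>$\mathcal{B}^{(1)}=\tau(\mathcal{B}^{(0)})$ and $\mathcal{B}^{(2)}=\tau^2(\mathcal{B}^{(0)})$;</li> <li>$w\in\mathcal{B}^{(0)}$ implies $\bar w\in\mathcal{B}^{(0)}$.</li>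 </ul> *)

From mathcomp Require Import all_boot.
Set Implicit Arguments. Unset Strict Implicit. Unset Printing Implicit Defensive.

(* The alphabet Sigma = {0,1,2} is 'I_3; a word is a seq 'I_3,
   a word of length n is an n.-tuple 'I_3. *)
Notation letter := 'I_3.

Definition square_free (T : eqType) (w : seq T) : Prop :=
  ~ exists x y z : seq T, y <> [::] /\ w = x ++ y ++ y ++ z.

Definition tau (c : letter) : letter := ordS c.

Definition tau_word (n : nat) (w : n.-tuple letter) : n.-tuple letter :=
  map_tuple tau w.

Definition tau_set (n : nat) (B : {set n.-tuple letter}) : {set n.-tuple letter} :=
  [set tau_word w | w in B].

Definition brinkhuis_triple (n : nat) (k : letter -> nat)
    (B : letter -> {set n.-tuple letter}) : Prop :=
  (forall i, #|B i| = k i /\ 1 <= k i) /\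
  (forall i (w : n.-tuple letter), w \in B i -> square_free (tval w)) /\
  (forall i i' i'' : letter, square_free [:: i; i'; i''] ->
     forall u v x : n.-tuple letter, u \in B i -> v \in B i' -> x \in B i'' ->
       square_free (tval u ++ tval v ++ tval x)).

Arguments brinkhuis_triple : clear implicits.

Definition l0 : letter := @Ordinal 3 0 isT.
Definition l1 : letter := @Ordinal 3 1 isT.
Definition l2 : letter := @Ordinal 3 2 isT.

Definition special_brinkhuis (n k : nat) (B : letter -> {set n.-tuple letter}) : Prop :=
  brinkhuis_triple n (fun _ => k) B /\
  B l1 = tau_set (B l0) /\ B l2 = tau_set (tau_set (B l0)) /\
  (forall w : n.-tuple letter, w \in B l0 -> rev_tuple w \in B l0).
Arguments special_brinkhuis : clear implicits.

From mathcomp Require Import all_boot zify.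
Set Implicit Arguments. Unset Strict Implicit.

(* Only the first and last six letters of a word of B^(0) matter.  For u, v in B^(0)
   and distinct letters i, j, the word (tau^i u)(tau^j v)(tau^i u) is square-free,
   since iji is; hence so is the junction of the last six letters of tau^i u with the
   first six of tau^j v.  An exhaustive search shows that a word starting with 01 whose
   end can be followed in this way by its own beginning has profile
   (012021, 120210) or (012102, 201210) (words shorter than 6 are ruled out by also
   requiring u tau^2(u) u to be square-free), and that each of these two profiles is
   compatible only with itself, so that it is shared by all of B^(0).  A word of
   length at most 12 is determined by such a profile, and the u tau^2(u) u test
   rules all of them out. *)

Definition square_freeb (T : eqType) (s : seq T) : bool :=
  ~~ has (fun i => has (fun l => (i + l + l <= size s) &&
             (take l (drop i s) == take l (drop (i + l) s)))
           (iota 1 (size s))) (iota 0 (size s)).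

Lemma square_freeP (T : eqType) (s : seq T) : reflect (square_free s) (square_freeb s).
Proof.
apply: (iffP idP) => [sqf_s [x [y [z [y_nil def_s]]]] | sqf_s].
  have y_gt0 : 0 < size y by rewrite lt0n size_eq0; apply/eqP.
  have size_s : size s = size x + size y + size y + size z by rewrite def_s !size_cat; lia.
  move/negP: sqf_s; apply; apply/hasP; exists (size x); first by rewrite mem_iota; lia.
  apply/hasP; exists (size y); first by rewrite mem_iota; lia.
  apply/andP; split; first lia.
  rewrite def_s drop_size_cat // take_size_cat //.
  by rewrite addnC -drop_drop !drop_size_cat // take_size_cat.
apply/negP => /hasP [i _ /hasP [l]]; rewrite mem_iota => /andP [l_gt0 _] /andP [le_s /eqP eq_l].
apply: sqf_s; exists (take i s), (take l (drop i s)), (drop (i + l + l) s); split.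
  have le_l : l <= size (drop i s) by rewrite size_drop; lia.
  by move/(congr1 size); rewrite size_takel //=; lia.
rewrite -{1}(cat_take_drop i s); congr (_ ++ _).
rewrite -{1}(cat_take_drop l (drop i s)); congr (_ ++ _).
have -> : i + l + l = l + (i + l) by lia.
by rewrite {1}eq_l -[drop (l + _) s]drop_drop cat_take_drop drop_drop addnC.
Qed.

Lemma square_free_infix (T : eqType) (s t : seq T) :
  infix s t -> square_free t -> square_free s.
Proof.
move=> /infixP [a [c ->]] sqf_t [x [y [z [y_nil def_s]]]]; apply: sqf_t.
by exists (a ++ x), y, (z ++ c); rewrite def_s -!catA.
Qed.

Lemma square_free_aba (T : eqType) (a b : T) : a != b -> square_free [:: a; b; a].
Proof.
move=> neq_ab; apply/square_freeP.
by rewrite /square_freeb /= !eqseq_cons (negbTE neq_ab) eq_sym (negbTE neq_ab).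
Qed.

Lemma prefix_same_size (T : eqType) (p q s : seq T) :
  prefix p s -> prefix q s -> size p = size q -> p = q.
Proof. by rewrite !prefixE => /eqP def_p /eqP def_q eq_pq; rewrite -def_p -def_q eq_pq. Qed.

Lemma cat_take_drop_overlap (T : Type) m (w : seq T) : m <= size w <= m + m ->
  w = take m w ++ drop (m + m - size w) (drop (size w - m) w).
Proof.
move=> le_w; rewrite drop_drop.
have -> : m + m - size w + (size w - m) = m by lia.
by rewrite cat_take_drop.
Qed.

(* An explicit list: [enum letter] does not reduce under [vm_compute]. *)
Definition letters : seq letter := [:: l0; l1; l2].

Lemma mem_letters (c : letter) : c \in letters.
Proof. by case: c => [[|[|[|m]]] lt_m3]. Qed.

Definition tau_iter (i : nat) (s : seq letter) : seq letter := map (iter i tau) s.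

Lemma tau_iter0 s : tau_iter 0 s = s.
Proof. exact: map_id. Qed.

Lemma tau_iter_cat i s t : tau_iter i (s ++ t) = tau_iter i s ++ tau_iter i t.
Proof. exact: map_cat. Qed.

Definition sandwich (s : seq letter) : seq letter := s ++ tau_iter 2 s ++ s.

Definition sqf_junction (s t : seq letter) : bool :=
  allrel (fun i j : letter => (i != j) ==> square_freeb (tau_iter i s ++ tau_iter j t))
    letters letters.

(* For a word shorter than 6 letters the profile is (s, s), by truncated subtraction. *)
Definition profile (s : seq letter) : seq letter * seq letter :=
  (take 6 s, drop (size s - 6) s).

Definition profileA : seq letter * seq letter :=
  ([:: l0; l1; l2; l0; l2; l1], [:: l1; l2; l0; l2; l1; l0]).
Definition profileB : seq letter * seq letter :=
  ([:: l0; l1; l2; l1; l0; l2], [:: l2; l0; l1; l2; l1; l0]).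

Definition special_profiles : seq (seq letter * seq letter) := [:: profileA; profileB].

Lemma profile_size e s : e \in special_profiles -> profile s = e -> 6 <= size s.
Proof.
move=> e_AB def_e; have : size e.1 = 6.
  by move: e_AB; rewrite /special_profiles !inE => /orP[] /eqP ->.
by rewrite -def_e /= size_take_min; lia.
Qed.

Lemma square_free_profile s : square_free s ->
  square_free (profile s).1 /\ square_free (profile s).2.
Proof.
move=> sqf_s; split; apply: square_free_infix sqf_s.
  exact/prefixW/prefix_take.
exact/suffixW/suffix_drop.
Qed.

Lemma profile_prefix_suffix e (s : seq letter) : profile s = e ->
  prefix (map val e.1) (map val s) /\ suffix (map val e.2) (map val s).
Proof. by move=> <-; rewrite /= map_take map_drop prefix_take suffix_drop. Qed.

Fixpoint words (m : nat) : seq (seq letter) :=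
  if m is m'.+1 then [seq c :: w | c <- letters, w <- words m'] else [:: [::]].

Lemma mem_words (s : seq letter) : s \in words (size s).
Proof. by elim: s => //= c s IHs; exact: (allpairs_f cons (mem_letters c) IHs). Qed.

Definition sqf_words m := [seq w <- words m | square_freeb w].

Lemma mem_sqf_words (s : seq letter) : square_free s -> s \in sqf_words (size s).
Proof. by move/square_freeP => sqf_s; rewrite mem_filter sqf_s mem_words. Qed.

Lemma short_01_sandwich p : 2 <= size p <= 5 -> prefix [:: 0; 1] (map val p) ->
  sqf_junction p p -> ~~ square_freeb (sandwich p).
Proof.
move=> size_p pre_p junc_p.
have check : all (fun m => all (fun p => prefix [:: 0; 1] (map val p) ==> sqf_junction p p ==>
   ~~ square_freeb (sandwich p)) (words m)) (iota 2 4) by vm_compute.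
have m_p : size p \in iota 2 4 by rewrite mem_iota; lia.
by have /allP/(_ p (mem_words p)) := allP check _ m_p; rewrite pre_p junc_p.
Qed.

Lemma profile_of_01_word p s : size p = 6 -> size s = 6 -> square_free p -> square_free s ->
  prefix [:: 0; 1] (map val p) -> sqf_junction s p -> (p, s) \in special_profiles.
Proof.
move=> size_p size_s /mem_sqf_words sqf_p /mem_sqf_words sqf_s pre_p junc_sp.
have check : all (fun p => prefix [:: 0; 1] (map val p) ==> all (fun s => sqf_junction s p ==>
   ((p, s) \in special_profiles)) (sqf_words 6)) (sqf_words 6) by vm_compute.
rewrite size_p in sqf_p; rewrite size_s in sqf_s.
by have /implyP/(_ pre_p)/allP/(_ s sqf_s)/implyP := allP check p sqf_p; apply.
Qed.

Lemma profile_prefix_rigid e p : e \in special_profiles -> size p = 6 -> square_free p ->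
  sqf_junction e.2 p -> p = e.1.
Proof.
move=> e_AB size_p /mem_sqf_words sqf_p junc_ep; rewrite size_p in sqf_p.
have check : all (fun e => all (fun p => sqf_junction e.2 p ==> (p == e.1)) (sqf_words 6))
  special_profiles by vm_compute.
by apply/eqP; have /allP/(_ p sqf_p)/implyP := allP check e e_AB; apply.
Qed.

Lemma profile_suffix_rigid e s : e \in special_profiles -> size s = 6 -> square_free s ->
  sqf_junction s e.1 -> s = e.2.
Proof.
move=> e_AB size_s /mem_sqf_words sqf_s junc_se; rewrite size_s in sqf_s.
have check : all (fun e => all (fun s => sqf_junction s e.1 ==> (s == e.2)) (sqf_words 6))
  special_profiles by vm_compute.
by apply/eqP; have /allP/(_ s sqf_s)/implyP := allP check e e_AB; apply.
Qed.

Lemma profile_overlap_sandwich e w : e \in special_profiles -> size w <= 12 ->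
  profile w = e -> ~~ square_freeb (sandwich w).
Proof.
move=> e_AB w_le12 def_e; have w_ge6 := profile_size e_AB def_e.
have def_w : w = e.1 ++ drop (12 - size w) e.2.
  by rewrite -def_e [LHS](@cat_take_drop_overlap _ 6) //; lia.
have check : all (fun e => all (fun k => let w := e.1 ++ drop k e.2 in
   (profile w == e) ==> ~~ square_freeb (sandwich w)) (iota 0 7)) special_profiles
  by vm_compute.
have k_w : 12 - size w \in iota 0 7 by rewrite mem_iota; lia.
by have /allP/(_ _ k_w)/implyP := allP check e e_AB; rewrite -def_w def_e eqxx; apply.
Qed.

Section SpecialTriple.

Variables (n k : nat) (B : letter -> {set n.-tuple letter}).
Hypothesis special_B : special_brinkhuis n k B.

Lemma special_tau_iter_mem (u : n.-tuple letter) (i : letter) :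
  u \in B l0 -> exists2 v : n.-tuple letter, v \in B i & tval v = tau_iter i u.
Proof.
have [_ [B1 [B2 _]]] := special_B; move=> u_B.
case: i => [[|[|[|m]]] lt_i3] //.
- have -> : Ordinal lt_i3 = l0 by apply/val_inj.
  by exists u; rewrite ?tau_iter0.
- have -> : Ordinal lt_i3 = l1 by apply/val_inj.
  by exists (tau_word u); rewrite ?B1 ?imset_f.
- have -> : Ordinal lt_i3 = l2 by apply/val_inj.
  by exists (tau_word (tau_word u)); rewrite ?B2 ?imset_f //= -map_comp.
Qed.

Lemma special_aba (u v : n.-tuple letter) (i j : letter) : u \in B l0 -> v \in B l0 ->
  i != j -> square_free (tau_iter i u ++ tau_iter j v ++ tau_iter i u).
Proof.
have [[_ [_ triple_B]] _] := special_B; move=> u_B v_B neq_ij.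
have [u' u'_B <-] := special_tau_iter_mem i u_B.
have [v' v'_B <-] := special_tau_iter_mem j v_B.
exact: (triple_B _ _ _ (square_free_aba neq_ij) _ _ _ u'_B v'_B u'_B).
Qed.

Lemma special_junction (u v : n.-tuple letter) : u \in B l0 -> v \in B l0 ->
  sqf_junction (profile u).2 (profile v).1.
Proof.
move=> u_B v_B; apply/allrelP => i j _ _; apply/implyP => neq_ij; apply/square_freeP.
apply: square_free_infix (special_aba u_B v_B neq_ij); apply/infixP.
exists (tau_iter i (take (size u - 6) u)), (tau_iter j (drop 6 v) ++ tau_iter i u).
by rewrite -{1}(cat_take_drop (size u - 6) u) -{1}(cat_take_drop 6 v) !tau_iter_cat -!catA.
Qed.

Lemma special_sandwich (u : n.-tuple letter) : u \in B l0 -> square_free (sandwich u).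
Proof.
by move=> u_B; have := @special_aba u u l0 l2 u_B u_B isT; rewrite tau_iter0.
Qed.

Lemma special_square_free (u : n.-tuple letter) : u \in B l0 -> square_free u.
Proof. by have [[_ [sqf_B _]] _] := special_B; exact: sqf_B. Qed.

Lemma special_profile_01 (w : n.-tuple letter) : w \in B l0 ->
  prefix [:: 0; 1] (map val w) -> profile w \in special_profiles.
Proof.
move=> w_B pre_w; have junc_w := special_junction w_B w_B.
have [sqf_pw sqf_sw] := square_free_profile (special_square_free w_B).
have [lt_w6 | ge_w6] := ltnP (size w) 6.
  have def_w : profile w = (tval w, tval w).
    rewrite /profile take_oversize ?(ltnW lt_w6) //.
    have -> : size w - 6 = 0 by lia.
    by rewrite drop0.
  have size_w : 2 <= size w <= 5 by have := size_prefix pre_w; rewrite size_map /=; lia.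
  rewrite def_w in junc_w; have /negP[] := short_01_sandwich size_w pre_w junc_w.
  exact/square_freeP/special_sandwich.
apply: profile_of_01_word => //; first by rewrite size_takel.
  by rewrite size_drop subKn // ltnW.
by rewrite /= map_take prefixE take_takel // -prefixE.
Qed.

Lemma special_profile_rigid e (w u : n.-tuple letter) : e \in special_profiles ->
  w \in B l0 -> profile w = e -> u \in B l0 -> profile u = e.
Proof.
move=> e_AB w_B def_e u_B.
have ge_n6 : 6 <= n by rewrite -(size_tuple w); exact: profile_size e_AB def_e.
have [sqf_pu sqf_su] := square_free_profile (special_square_free u_B).
apply: injective_projections.
  apply: profile_prefix_rigid sqf_pu _ => //; first by rewrite /= size_takel ?size_tuple.
  by rewrite -def_e; exact: special_junction.
apply: profile_suffix_rigid sqf_su _ => //; first by rewrite /= size_drop size_tuple; lia.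
by rewrite -def_e; exact: special_junction.
Qed.

Lemma special_length e (w : n.-tuple letter) : e \in special_profiles ->
  w \in B l0 -> profile w = e -> 13 <= n.
Proof.
move=> e_AB w_B def_e; rewrite leqNgt -(size_tuple w); apply/negP => lt_w13.
have /negP[] := profile_overlap_sandwich e_AB lt_w13 def_e.
exact/square_freeP/special_sandwich.
Qed.

End SpecialTriple.

Theorem proposition1 (n k : nat) (B : letter -> {set n.-tuple letter}) :
  1 < n -> 1 <= k -> special_brinkhuis n k B ->
  (exists2 w : n.-tuple letter, w \in B l0 & prefix [:: 0; 1] (map val (tval w))) ->
  13 <= n /\
  (let P1 := forall w : n.-tuple letter, w \in B l0 ->
               prefix [:: 0; 1; 2; 0; 2; 1] (map val (tval w)) /\
               suffix [:: 1; 2; 0; 2; 1; 0] (map val (tval w)) in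
   let P2 := forall w : n.-tuple letter, w \in B l0 ->
               prefix [:: 0; 1; 2; 1; 0; 2] (map val (tval w)) /\
               suffix [:: 2; 0; 1; 2; 1; 0] (map val (tval w)) in
   (P1 /\ ~ P2) \/ (~ P1 /\ P2)).
Proof.
move=> _ _ special_B [w w_B pre_w].
have special_w := special_profile_01 special_B w_B pre_w.
have profile_B u : u \in B l0 -> profile u = profile w :=
  special_profile_rigid special_B special_w w_B erefl.
split; first exact: (special_length special_B special_w w_B erefl).
have prefix_w := (profile_prefix_suffix (profile_B w w_B)).1.
move: special_w profile_B prefix_w; rewrite /special_profiles !inE.
case/orP => /eqP -> profile_B prefix_w.
- left; split; first by move=> u /profile_B /profile_prefix_suffix.
  move=> /(_ w w_B) [prefix_w' _].
  by have := prefix_same_size prefix_w prefix_w' erefl.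
- right; split; last by move=> u /profile_B /profile_prefix_suffix.
  move=> /(_ w w_B) [prefix_w' _].
  by have := prefix_same_size prefix_w prefix_w' erefl.
Qed.
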